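(* Let $0<s_1<s_2<1$, $2s_1<d<\frac{2s_1s_2}{s_2-s_1}$, $a>0$, and suppose $g$ satisfies $(G_1)$–$(G_3)$ and $V$ satisfies $(V_1)$–$(V_3)$. Then $J|_{\mathcal{P}_a}$ is coercive: $$\lim_{\substack{u\in\mathcal{P}_a,\\ |\nabla_{s_1}u|_2^2+|\nabla_{s_2}u|_2^2\to\infty}}J(u)=+\infty.$$
   Context: For $s\in(0,1)$, $|\nabla_s u|_2^2=\int_{\mathbb{R}^d\times\mathbb{R}^d}\frac{|u(x)-u(y)|^2}{|x-y|^{d+2s}}dx\,dy$; $|\cdot|_p$ is the $L^p(\mathbb{R}^d)$ norm; $H^{s_1,s_2}(\mathbb{R}^d)=\{u\in L^2(\mathbb{R}^d):|\nabla_{s_1}u|_2<\infty,\ |\nabla_{s_2}u|_2<\infty\}$. $S_a=\{u\in H^{s_1,s_2}(\mathbb{R}^d):|u|_2^2=a\}$. $g:\mathbb{R}\to\mathbb{R}$, $G(s)=\int_0^sg$, $\widetilde G(s)=\frac12g(s)s-G(s)$. $(G_1)$: $g$ continuous, odd. $(G_2)$: there exist $\alpha,\beta$ with $2+\frac{4s_2}{d}<\alpha<\beta<\frac{2d}{d-2s_1}$ and $\alpha G(s)\le g(s)s\le\beta G(s)$ for all $s$. $(G_3)$: $\widetilde G'$ exists and $\widetilde G'(s)s\ge\alpha\widetilde G(s)$ for all $s$. $(V_1)$: $\lim_{|x|\to\infty}V(x)=\sup V=0$ and there is $\sigma_1\in[0,\frac{d(\alpha-2)-4}{d(\alpha-2)}]$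 with $|\int Vu^2dx|\le\sigma_1(|\nabla_{s_1}u|_2^2+|\nabla_{s_2}u|_2^2)$ for all $u$. $(V_2)$: $\nabla V$ exists a.e.; $W(x)=\frac12\langle\nabla V(x),x\rangle$ satisfies $\lim_{|x|\to\infty}W(x)=0$ and there is $\sigma_2$ with $0<\sigma_2<\min\{s_1-\frac{(\beta-2)d}{2\beta},\frac{d(\alpha-2)(1-\sigma_1)}{4}-s_2\}$ and $|\int Wu^2dx|\le\sigma_2(|\nabla_{s_1}u|_2^2+|\nabla_{s_2}u|_2^2)$ for all $u$. $(V_3)$: $\nabla W$ exists a.e.; $Y(x)=(d\alpha/2-d-1)W(x)+\langle\nabla W(x),x\rangle$ satisfies $|\int Yu^2dx|\le\sigma_3(|\nabla_{s_1}u|_2^2+|\nabla_{s_2}u|_2^2)$ for all $u$, for some $\sigma_3\in[0,s_1^2(d\alpha/2-d-2s_2)]$. (All $u\in H^{s_1,s_2}(\mathbb{R}^d)$.) $J(u)=\frac12|\nabla_{s_1}u|_2^2+\frac12|\nabla_{s_2}u|_2^2+\frac12\int_{\mathbb{R}^d}V(x)u^2dx-\int_{\mathbb{R}^d}G(u)dx$; $P(u)=s_1|\nabla_{s_1}u|_2^2+s_2|\nabla_{s_2}u|_2^2-\frac12\int_{\mathbb{R}^d}\langle\nabla V(x),x\rangle u^2dx-d\int_{\mathbb{R}^d}\widetilde G(u)dx$; $\mathcal{P}_a=\{u\in S_a:P(u)=0\}$. *)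

From HB Require Import structures.
From mathcomp Require Import all_boot all_order all_algebra.
From mathcomp Require Import all_classical all_reals all_analysis.
Import Order.TTheory GRing.Theory Num.Theory numFieldNormedType.Exports.
Local Open Scope classical_set_scope.
Local Open Scope ring_scope.

(* R^d is modelled as d.-tuple R, with its product sigma-algebra.            *)

Fixpoint leb_tuple (R : realType) (n : nat) : set (n.-tuple R) -> \bar R :=
  match n with
  | 0 => fun A => (\1_A [tuple])%:E
  | n'.+1 => pushforward ((@lebesgue_measure R) \x (leb_tuple R n'))%E
               (fun p : R * n'.-tuple R => [tuple of p.1 :: p.2])
  end.

Set Implicit Arguments. Unset Strict Implicit. Unset Printing Implicit Defensive.

Definition tsub (R : realType) (d : nat) (x y : d.-tuple R) : d.-tuple R :=
  [tuple tnth x i - tnth y i | i < d].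
Definition enorm (R : realType) (d : nat) (x : d.-tuple R) : R :=
  Num.sqrt (\sum_(i < d) tnth x i ^+ 2).

Definition tupd (R : realType) (d : nat) (x : d.-tuple R) (i : 'I_d) (t : R)
  : d.-tuple R := [tuple if j == i then t else tnth x j | j < d].
Definition has_partial (R : realType) (d : nat) (f : d.-tuple R -> R)
  (i : 'I_d) (x : d.-tuple R) : Prop :=
  derivable (fun t => f (tupd x i t)) (tnth x i) 1.
Definition partial (R : realType) (d : nat) (f : d.-tuple R -> R)
  (i : 'I_d) (x : d.-tuple R) : R :=
  derive1 (fun t => f (tupd x i t)) (tnth x i).
Definition has_gradient (R : realType) (d : nat) (f : d.-tuple R -> R)
  (x : d.-tuple R) : Prop := forall i, has_partial f i x.
Definition grad_dot_x (R : realType) (d : nat) (f : d.-tuple R -> R)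
  (x : d.-tuple R) : R := \sum_(i < d) partial f i x * tnth x i.

Definition L2sq (R : realType) (d : nat) (u : d.-tuple R -> R) : \bar R :=
  (\int[leb_tuple R d]_x ((u x) ^+ 2)%:E)%E.
(* |nabla_s u|_2^2 (as an extended real) *)
Definition gsemi (R : realType) (d : nat) (s : R) (u : d.-tuple R -> R) : \bar R :=
  (\int[(leb_tuple R d \x leb_tuple R d)%E]_z
     (((u z.1 - u z.2) ^+ 2) / (enorm (tsub z.1 z.2)) `^ (d%:R + 2 * s))%:E)%E.
Definition gnorm2 (R : realType) (d : nat) (s : R) (u : d.-tuple R -> R) : R :=
  fine (gsemi s u).

Definition H_s1s2 (R : realType) (d : nat) (s1 s2 : R) (u : d.-tuple R -> R) : Prop :=
  [/\ measurable_fun setT u, (L2sq u < +oo)%E,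
      (gsemi s1 u < +oo)%E & (gsemi s2 u < +oo)%E].
Definition S_a (R : realType) (d : nat) (s1 s2 a : R) (u : d.-tuple R -> R) : Prop :=
  H_s1s2 s1 s2 u /\ L2sq u = a%:E.

Definition Gprim (R : realType) (g : R -> R) (s : R) : R :=
  if 0 <= s then Rintegral (@lebesgue_measure R) `[0, s]%classic g
  else - Rintegral (@lebesgue_measure R) `[s, 0]%classic g.
Definition Gtilde (R : realType) (g : R -> R) (s : R) : R :=
  g s * s / 2 - Gprim g s.

Definition intRd (R : realType) (d : nat) (f : d.-tuple R -> R) : R :=
  fine (\int[leb_tuple R d]_x (f x)%:E)%E.

Definition J_func (R : realType) (d : nat) (s1 s2 : R) (V : d.-tuple R -> R)
  (g : R -> R) (u : d.-tuple R -> R) : R :=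
  gnorm2 s1 u / 2 + gnorm2 s2 u / 2 + intRd (fun x => V x * u x ^+ 2) / 2
  - intRd (fun x => Gprim g (u x)).

Definition P_func (R : realType) (d : nat) (s1 s2 : R) (V : d.-tuple R -> R)
  (g : R -> R) (u : d.-tuple R -> R) : R :=
  s1 * gnorm2 s1 u + s2 * gnorm2 s2 u
  - intRd (fun x => grad_dot_x V x * u x ^+ 2) / 2
  - d%:R * intRd (fun x => Gtilde g (u x)).

Definition Wfun (R : realType) (d : nat) (V : d.-tuple R -> R) (x : d.-tuple R) : R :=
  grad_dot_x V x / 2.
Definition Yfun (R : realType) (d : nat) (alpha : R) (V : d.-tuple R -> R)
  (x : d.-tuple R) : R :=
  (d%:R * alpha / 2 - d%:R - 1) * Wfun V x + grad_dot_x (Wfun V) x.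

Definition form_bound (R : realType) (d : nat) (s1 s2 sigma : R)
  (F : d.-tuple R -> R) : Prop :=
  forall u : d.-tuple R -> R, H_s1s2 s1 s2 u ->
    (leb_tuple R d).-integrable setT (fun x => (F x * u x ^+ 2)%:E) /\
    `| intRd (fun x => F x * u x ^+ 2) | <= sigma * (gnorm2 s1 u + gnorm2 s2 u).

Definition condG1 (R : realType) (g : R -> R) : Prop :=
  (forall x : R, {for x, continuous g}) /\ forall s, g (- s) = - g s.
Definition condG2 (R : realType) (d : nat) (s1 s2 alpha beta : R) (g : R -> R) : Prop :=
  [/\ 2 + 4 * s2 / d%:R < alpha, alpha < beta,
      beta < 2 * d%:R / (d%:R - 2 * s1) &
      forall s, alpha * Gprim g s <= g s * s /\ g s * s <= beta * Gprim g s].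
Definition condG3 (R : realType) (alpha : R) (g : R -> R) : Prop :=
  (forall s, derivable (Gtilde g) s 1) /\
  forall s, derive1 (Gtilde g) s * s >= alpha * Gtilde g s.

Definition condV1 (R : realType) (d : nat) (s1 s2 alpha sigma1 : R)
  (V : d.-tuple R -> R) : Prop :=
  [/\ (forall x, V x <= 0),
      (forall e : R, 0 < e -> exists r : R, forall x, r < enorm x -> `|V x| < e),
      0 <= sigma1 <= (d%:R * (alpha - 2) - 4) / (d%:R * (alpha - 2)) &
      form_bound s1 s2 sigma1 V].
Definition condV2 (R : realType) (d : nat) (s1 s2 alpha beta sigma1 sigma2 : R)
  (V : d.-tuple R -> R) : Prop :=
  [/\ (leb_tuple R d).-negligible [set x | ~ has_gradient V x],
      (forall e : R, 0 < e -> exists r : R, forall x,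
          r < enorm x -> has_gradient V x -> `|Wfun V x| < e),
      0 < sigma2 < Num.min (s1 - (beta - 2) * d%:R / (2 * beta))
                          (d%:R * (alpha - 2) * (1 - sigma1) / 4 - s2) &
      form_bound s1 s2 sigma2 (Wfun V)].
Definition condV3 (R : realType) (d : nat) (s1 s2 alpha sigma3 : R)
  (V : d.-tuple R -> R) : Prop :=
  [/\ (leb_tuple R d).-negligible [set x | ~ has_gradient (Wfun V) x],
      0 <= sigma3 <= s1 ^+ 2 * (d%:R * alpha / 2 - d%:R - 2 * s2) &
      form_bound s1 s2 sigma3 (Yfun alpha V)].

From HB Require Import structures.
From mathcomp Require Import all_boot all_order all_algebra.
From mathcomp Require Import all_classical all_reals all_analysis.
From mathcomp Require Import ring lra.
Import Order.TTheory GRing.Theory Num.Theory numFieldNormedType.Exports.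
Local Open Scope classical_set_scope.
Local Open Scope ring_scope.

(* On P_a the Pohozaev identity P(u) = 0 expresses d |G~(u)|_1 through the
   fractional seminorms and the W-term, and (G2) gives G <= 2/(alpha-2) G~.
   Together with the form bounds on V and W this yields
     d (alpha - 2) J(u) >= (d (alpha-2)(1 - sigma1)/2 - 2 (s2 + sigma2)) T(u),
   T(u) = |nabla_{s1} u|^2 + |nabla_{s2} u|^2, and the constant in front of T
   is positive by the upper bound on sigma2 in (V2). *)

Set Implicit Arguments.
Unset Strict Implicit.
Unset Printing Implicit Defensive.
Import HBNNSimple.

Section ExtendedReals.
Context {R : realType}.
Local Open Scope ereal_scope.

Lemma pmuleDr (c : R) (x y : \bar R) : (0 < c)%R ->
  c%:E * (x + y) = c%:E * x + c%:E * y.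
Proof.
move=> c0; have c0' : 0 < c%:E by rewrite lte_fin.
move: x y => [x| |] [y| |];
  rewrite ?addNye ?addeNy ?addye ?addey ?gt0_muley ?gt0_muleNy ?addNye ?addeNy ?addye ?addey //.
by rewrite -EFinD -!EFinM mulrDr.
Qed.

Lemma pmule_fsumr (I : choiceType) (P : set I) (F : I -> \bar R) (c : R) :
  (0 < c)%R -> c%:E * (\sum_(i \in P) F i) = \sum_(i \in P) c%:E * F i.
Proof.
move=> c0.
have -> : finite_support 0 P (fun i => c%:E * F i) = finite_support 0 P F.
  have supp : (fun i => c%:E * F i) @^-1` [set~ 0] = F @^-1` [set~ 0].
    apply/seteqP; split => i /=; apply: contra_not; first by move=> ->; rewrite mule0.
    by move/eqP; rewrite mule_eq0 eqe gt_eqF //= => /eqP.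
  by rewrite /finite_support !unlock supp.
apply: (big_morph (fun x => c%:E * x)); first by move=> x y; exact: pmuleDr.
by rewrite mule0.
Qed.

(* The reverse bound forces x and y to be finite or infinite together, so the
   junk value fine +oo = 0 cannot break the inequality. *)
Lemma fine_le_pmul (x y : \bar R) (k k' : R) : (0 < k)%R -> (0 < k')%R ->
  0 <= x -> 0 <= y -> x <= k%:E * y -> y <= k'%:E * x -> (fine x <= k * fine y)%R.
Proof.
move=> k0 k'0; case: x => [r| |] //= r0; case: y => [t| |] //= t0 xy yx.
by rewrite mulr0.
Qed.

End ExtendedReals.

(* leb_tuple carries no measure structure, so the integral facts used below are
   proved for the integral against an arbitrary set function; positivity only
   needs mu set0 = 0. *)
Section SetFunctionIntegral.
Context {d} {T : measurableType d} {R : realType} (mu : set T -> \bar R).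
Local Open Scope ereal_scope.

Lemma sintegralZl (h : T -> R) (c : R) : (0 < c)%R ->
  sintegral mu (fun x => c * h x)%R = c%:E * sintegral mu h.
Proof.
move=> c0; have c0' : c != 0%R by rewrite gt_eqF.
rewrite /sintegral pmule_fsumr // (reindex_fsbigT ( *%R c)); last first.
  by exists ( *%R c^-1) => x /=; rewrite ?mulKf ?mulVKf.
apply: eq_fsbigr => r _.
have -> : (fun x => c * h x)%R @^-1` [set (c * r)%R] = h @^-1` [set r].
  by apply/seteqP; split => x /=; [move/(mulfI c0')|move=> ->].
by rewrite EFinM muleA.
Qed.

Let nnintegral (f : T -> \bar R) := ereal_sup [set sintegral mu h |
  h in [set h : {nnsfun T >-> R} | forall x, (h x)%:E <= f x]].

Let integralE D f :
  \int[mu]_(x in D) f x = nnintegral ((f \_ D) ^\+) - nnintegral ((f \_ D) ^\-).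
Proof. by []. Qed.

Let nnintegralZl_le f (c : R) : (0 < c)%R ->
  nnintegral (fun x => c%:E * f x) <= c%:E * nnintegral f.
Proof.
move=> c0; apply: ge_ereal_sup => _ [h hf <-].
have c'0 : (0 <= c^-1)%R by rewrite invr_ge0 ltW.
pose h' := scale_nnsfun h c'0.
have -> : sintegral mu h = c%:E * sintegral mu h'.
  rewrite -sintegralZl //; apply: eq_sintegral => x /=.
  by rewrite mulrA divff ?mul1r // gt_eqF.
rewrite lee_pmul2l ?lte_fin //; apply: ereal_sup_ubound; exists h' => //= x.
by rewrite -(@lee_pmul2l _ c%:E) ?lte_fin // -EFinM mulrA divff ?mul1r ?gt_eqF.
Qed.

Let nnintegralZl f (c : R) : (0 < c)%R ->
  nnintegral (fun x => c%:E * f x) = c%:E * nnintegral f.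
Proof.
move=> c0; apply/eqP; rewrite eq_le nnintegralZl_le //=.
have c'0 : (0 < c^-1)%R by rewrite invr_gt0.
have := @nnintegralZl_le (fun x => c%:E * f x) c^-1 c'0.
have -> : (fun x => c^-1%:E * (c%:E * f x)) = f.
  by apply/funext => x; rewrite muleA -EFinM (mulVf (lt0r_neq0 c0)) mul1e.
move=> le_f.
by rewrite -(@lee_pmul2l _ c^-1%:E) ?lte_fin // muleA -EFinM (mulVf (lt0r_neq0 c0)) mul1e.
Qed.

Lemma integralZl_gt0 D f (c : R) : (0 < c)%R ->
  \int[mu]_(x in D) (c%:E * f x) = c%:E * \int[mu]_(x in D) f x.
Proof.
move=> c0; rewrite !integralE.
have -> : (fun x => c%:E * f x) \_ D = (fun x => c%:E * (f \_ D) x).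
  by apply/funext => x; rewrite /patch; case: ifP; rewrite ?mule0.
by rewrite ge0_funeposM ?ge0_funenegM ?ltW // !nnintegralZl // pmuleDr // muleN.
Qed.

Hypothesis mu0 : mu set0 = 0.

Let sintegral_cst0 (h : T -> R) : (forall x, h x = 0%R) -> sintegral mu h = 0.
Proof.
move=> h0; have -> : h = cst 0%R by apply/funext.
apply: fsbig1 => r _; rewrite preimage_cst.
have [->|r0] := eqVneq r 0%R; first by rewrite mul0e.
by rewrite ifF ?mu0 ?mule0 //; apply/negbTE/negP => /set_mem /= r0'; rewrite r0' eqxx in r0.
Qed.

Let nnintegral_ge0 f : (forall x, 0 <= f x) -> 0 <= nnintegral f.
Proof.
move=> f0; apply: ereal_sup_ubound; exists (nnsfun0 : {nnsfun T >-> R}) => //.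
exact: sintegral_cst0.
Qed.

Let nnintegral_cst0 f : (forall x, f x = 0) -> nnintegral f = 0.
Proof.
move=> f0; apply/eqP; rewrite eq_le nnintegral_ge0 ?andbT; last by move=> x; rewrite f0.
apply: ge_ereal_sup => _ [h hf <-]; rewrite sintegral_cst0 // => x.
by apply/eqP; rewrite eq_le fun_ge0 andbT -lee_fin; have := hf x; rewrite f0.
Qed.

Let le_nnintegral f g : (forall x, f x <= g x) -> nnintegral f <= nnintegral g.
Proof.
move=> fg; apply: ereal_sup_le => _ [h hf <-]; exists h => //= x.
exact: le_trans (hf x) (fg x).
Qed.

Let ge0_integralTE f : (forall x, 0 <= f x) -> \int[mu]_x f x = nnintegral f.
Proof.
move=> f0; rewrite integralE patch_setT (@nnintegral_cst0 (_ ^\-)) ?sube0.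
  by congr nnintegral; apply/funext => x; rewrite funeposE; apply/max_idPl.
by move=> x; rewrite funenegE; apply/max_idPr; rewrite leeNl oppe0.
Qed.

Lemma integral_ge0_setfun D f : (forall x, D x -> 0 <= f x) ->
  0 <= \int[mu]_(x in D) f x.
Proof.
move=> f0; rewrite integralE (@nnintegral_cst0 (_ ^\-)) ?sube0; last first.
  move=> x; rewrite funenegE /patch; case: ifP => [/set_mem Dx|_].
    by apply/max_idPr; rewrite leeNl oppe0 f0.
  by rewrite oppe0 maxxx.
by apply: nnintegral_ge0 => x; rewrite funeposE le_max lexx orbT.
Qed.

Lemma integral0_eq_setfun D f : (forall x, f x = 0) -> \int[mu]_(x in D) f x = 0.
Proof.
move=> f0; rewrite integralE !nnintegral_cst0 ?sube0 // => x.
  by rewrite funenegE /patch; case: ifP; rewrite ?f0 oppe0 maxxx.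
by rewrite funeposE /patch; case: ifP; rewrite ?f0 maxxx.
Qed.

Lemma ge0_le_integral_setfun f g : (forall x, 0 <= f x) -> (forall x, f x <= g x) ->
  \int[mu]_x f x <= \int[mu]_x g x.
Proof.
move=> f0 fg; have g0 x : 0 <= g x by exact: le_trans (f0 x) (fg x).
by rewrite !ge0_integralTE //; exact: le_nnintegral.
Qed.

End SetFunctionIntegral.

Section LebesgueTuple.
Context {R : realType}.
Local Open Scope ereal_scope.

Lemma product_measure1_set0 d1 d2 (T1 : measurableType d1) (T2 : measurableType d2)
    (m1 : set T1 -> \bar R) (m2 : set T2 -> \bar R) :
  m1 set0 = 0 -> m2 set0 = 0 -> (m1 \x m2) set0 = 0.
Proof. by move=> m10 m20; apply: integral0_eq_setfun => // x /=; rewrite xsection0. Qed.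

Lemma leb_tuple_set0 n : leb_tuple R n set0 = 0.
Proof.
elim: n => [|n IHn] /=; first by rewrite indicE in_set0.
by rewrite /pushforward preimage_set0 product_measure1_set0.
Qed.

Lemma intRdZl d (f : d.-tuple R -> R) (c : R) : (0 < c)%R ->
  intRd (fun x => c * f x)%R = (c * intRd f)%R.
Proof.
move=> c0; rewrite /intRd; under eq_fun do rewrite EFinM.
rewrite integralZl_gt0 //; case: (\int[_]_x _) => [r| |] //=; rewrite ?mulr0 //.
  by rewrite gt0_muley ?lte_fin.
by rewrite gt0_muleNy ?lte_fin.
Qed.

Lemma le_intRd_pmul d (f h : d.-tuple R -> R) (k k' : R) : (0 < k)%R -> (0 < k')%R ->
  (forall x, 0 <= f x)%R -> (forall x, 0 <= h x)%R ->
  (forall x, f x <= k * h x)%R -> (forall x, h x <= k' * f x)%R ->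
  (intRd f <= k * intRd h)%R.
Proof.
move=> k0 k'0 f0 h0 fh hf.
have le_pmul (p q : d.-tuple R -> R) (c : R) : (0 < c)%R -> (forall x, 0 <= p x)%R ->
    (forall x, p x <= c * q x)%R ->
    \int[leb_tuple R d]_x (p x)%:E <= c%:E * \int[leb_tuple R d]_x (q x)%:E.
  move=> c0 p0 pq; rewrite -integralZl_gt0 //.
  by apply: (ge0_le_integral_setfun (leb_tuple_set0 d)) => x; rewrite -?EFinM lee_fin.
have int_ge0 (p : d.-tuple R -> R) : (forall x, 0 <= p x)%R ->
    0 <= \int[leb_tuple R d]_x (p x)%:E.
  by move=> p0; apply: (integral_ge0_setfun (leb_tuple_set0 d)) => x _; rewrite lee_fin.
exact: fine_le_pmul k0 k'0 (int_ge0 _ f0) (int_ge0 _ h0) (le_pmul _ _ _ k0 f0 fh)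
  (le_pmul _ _ _ k'0 h0 hf).
Qed.

Lemma gnorm2_ge0 d (s : R) (u : d.-tuple R -> R) : (0 <= gnorm2 s u)%R.
Proof.
apply/fine_ge0/integral_ge0_setfun => [|z _].
  exact: product_measure1_set0 (leb_tuple_set0 d) (leb_tuple_set0 d).
by rewrite lee_fin divr_ge0 ?sqr_ge0 ?powR_ge0.
Qed.

Lemma intRd_Wfun d (V f : d.-tuple R -> R) :
  intRd (fun x => Wfun V x * f x)%R = (intRd (fun x => grad_dot_x V x * f x) / 2)%R.
Proof.
rewrite [RHS]mulrC -intRdZl ?invr_gt0 //; congr intRd; apply/funext => x.
by rewrite /Wfun mulrAC mulrC.
Qed.

End LebesgueTuple.

Section EnergyEstimates.
Context {R : realType}.

Lemma Gprim_Gtilde_bounds (g : R -> R) (alpha beta s : R) :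
  2 < alpha -> alpha < beta ->
  alpha * Gprim g s <= g s * s /\ g s * s <= beta * Gprim g s ->
  [/\ 0 <= Gprim g s, (alpha - 2) * Gprim g s <= 2 * Gtilde g s
    & 2 * Gtilde g s <= (beta - 2) * Gprim g s].
Proof.
move=> alpha_gt2 alpha_beta [lo hi].
have G0 : 0 <= Gprim g s by nra.
by rewrite /Gtilde; split; lra.
Qed.

Lemma intRd_Gprim_le d (g : R -> R) (alpha beta : R) (u : d.-tuple R -> R) :
  2 < alpha -> alpha < beta ->
  (forall s, alpha * Gprim g s <= g s * s /\ g s * s <= beta * Gprim g s) ->
  (alpha - 2) * intRd (fun x => Gprim g (u x)) <= 2 * intRd (fun x => Gtilde g (u x)).
Proof.
move=> alpha_gt2 alpha_beta Gb.
have e0 : 0 < alpha - 2 by rewrite subr_gt0.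
have b0 : 0 < beta - 2 by rewrite subr_gt0 (lt_trans alpha_gt2).
have k0 : 0 < (alpha - 2)^-1 * 2 by rewrite mulr_gt0 ?invr_gt0.
have k'0 : 0 < (beta - 2) / 2 by rewrite divr_gt0.
rewrite -ler_pdivlMl // mulrA.
apply: le_intRd_pmul k0 k'0 _ _ _ _ => x;
  have [G0 lo hi] := Gprim_Gtilde_bounds alpha_gt2 alpha_beta (Gb (u x)).
- exact: G0.
- nra.
- by rewrite -mulrA ler_pdivlMl.
- by rewrite mulrAC ler_pdivlMr // mulrC.
Qed.

Lemma pohozaev_energy_bound (dn e s1 s2 sg1 sg2 A B IV IW IT IG : R) :
  0 < dn -> 0 < e -> s1 < s2 -> 0 <= A -> 0 <= B ->
  `|IV| <= sg1 * (A + B) -> `|IW| <= sg2 * (A + B) ->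
  s1 * A + s2 * B - IW - dn * IT = 0 -> e * IG <= 2 * IT ->
  (dn * e * (1 - sg1) / 2 - 2 * (s2 + sg2)) * (A + B)
    <= dn * e * (A / 2 + B / 2 + IV / 2 - IG).
Proof.
move=> dn0 e0 s12 A0 B0; rewrite !ler_norml => /andP[IV_lo _] /andP[IW_lo _] pohozaev G_le.
have s1A_le : s1 * A <= s2 * A by rewrite ler_wpM2r // ltW.
have IT_le : dn * IT <= (s2 + sg2) * (A + B) by lra.
have dne0 : 0 < dn * e by rewrite mulr_gt0.
nra.
Qed.

End EnergyEstimates.

Theorem corollary4p2 (R : realType) (d : nat) (s1 s2 a alpha beta : R)
  (sigma1 sigma2 sigma3 : R) (g : R -> R) (V : d.-tuple R -> R) :
  0 < s1 -> s1 < s2 -> s2 < 1 ->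
  2 * s1 < d%:R -> d%:R < 2 * s1 * s2 / (s2 - s1) ->
  0 < a ->
  condG1 g -> condG2 d s1 s2 alpha beta g -> condG3 alpha g ->
  condV1 s1 s2 alpha sigma1 V ->
  condV2 s1 s2 alpha beta sigma1 sigma2 V ->
  condV3 s1 s2 alpha sigma3 V ->
  forall M : R, exists K : R, forall u : d.-tuple R -> R,
    S_a s1 s2 a u -> P_func s1 s2 V g u = 0 ->
    K <= gnorm2 s1 u + gnorm2 s2 u -> M <= J_func s1 s2 V g u.
Proof.
move=> s1_gt0 s12 _ ds1 _ _ _ [alpha_lb alpha_beta _ Gb] _ [_ _ _ V_bound]
  [_ _ /andP[_ sigma2_ub] W_bound] _ M.
move: sigma2_ub; rewrite lt_min => /andP[_ sigma2_ub].
set dn : R := d%:R in ds1 sigma2_ub *; set e := alpha - 2 in sigma2_ub *.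
have dn_gt0 : 0 < dn by apply: lt_trans ds1; rewrite mulr_gt0.
have alpha_gt2 : 2 < alpha.
  by apply: le_lt_trans alpha_lb; rewrite lerDl divr_ge0 // mulr_ge0 // ltW // (lt_trans s1_gt0).
have e_gt0 : 0 < e by rewrite subr_gt0.
set c := dn * e * (1 - sigma1) / 2 - 2 * (s2 + sigma2).
have c_gt0 : 0 < c by rewrite /c; lra.
exists (dn * e * M / c) => u [Hu _] P0 K_le.
have [_ IV_bound] := V_bound u Hu.
have [_ IW_bound] := W_bound u Hu.
have pohozaev : s1 * gnorm2 s1 u + s2 * gnorm2 s2 u - intRd (fun x => Wfun V x * u x ^+ 2)
    - dn * intRd (fun x => Gtilde g (u x)) = 0.
  by rewrite -P0 intRd_Wfun.
have bound := pohozaev_energy_bound dn_gt0 e_gt0 s12 (gnorm2_ge0 _ _) (gnorm2_ge0 _ _)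
  IV_bound IW_bound pohozaev (intRd_Gprim_le u alpha_gt2 alpha_beta Gb).
rewrite -(ler_pM2l (mulr_gt0 dn_gt0 e_gt0)); apply: le_trans bound.
by rewrite [c * _]mulrC -ler_pdivrMr.
Qed.
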